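(* Let $\mu,\nu\in\mathbb{H}$ be pure unit quaternions, let $N\ge 1$, and let $\alpha_1,\ldots,\alpha_N,\beta_1,\ldots,\beta_N$ be real angles. Let $q$ be a quaternion-valued Gaussian random variable such that, for every $i\in\{1,\ldots,N\}$, $q\stackrel{d}{=} e^{\mu\alpha_i}\,q\,e^{\nu\beta_i}$. Then $q\stackrel{d}{=} e^{\mu\zeta}\,q\,e^{\nu\chi}$, where $\zeta=\sum_{i=1}^N\alpha_i$ and $\chi=\sum_{i=1}^N\beta_i$.
   Context: $\mathbb{H}$ denotes Hamilton's quaternions with basis $1,\mathbf{i},\mathbf{j},\mathbf{k}$, $\mathbf{i}^2=\mathbf{j}^2=\mathbf{k}^2=\mathbf{i}\mathbf{j}\mathbf{k}=-1$. A quaternion is pure if its real (scalar) part is zero; for a pure unit quaternion $\mu$ (so $\mu^2=-1$) and real $\theta$, $e^{\mu\theta}=\cos\theta+\mu\sin\theta$. A quaternion Gaussian random variable is a random quaternion $q=a+b\mathbf{i}+c\mathbf{j}+d\mathbf{k}$ whose real vector $(a,b,c,d)$ is Gaussian. The notation $X\stackrel{d}{=}Y$ means equality in distribution. In the paper's terminology, $q\stackrel{d}{=}e^{\mu\alpha}qe^{\nu\beta}$ is called ${}^{\alpha}(\mu,\nu)^{\beta}$-properness. *)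

From HB Require Import structures.
From mathcomp Require Import all_boot all_order all_algebra.
From mathcomp Require Import all_classical all_reals all_analysis.
Set Implicit Arguments.
Unset Strict Implicit.
Unset Printing Implicit Defensive.
Import Order.TTheory GRing.Theory Num.Theory.
Local Open Scope classical_set_scope.
Local Open Scope ring_scope.

(** * Hamilton's quaternions over a real field R: q = qr + qi i + qj j + qk k *)
Record quat (R : Type) := Quat { qr : R; qi : R; qj : R; qk : R }.

Section Quaternions.
Variable R : realType.

(** Hamilton product, with i^2 = j^2 = k^2 = ijk = -1. *)
Definition qmul (p q : quat R) : quat R :=
  Quat (qr p * qr q - qi p * qi q - qj p * qj q - qk p * qk q)
       (qr p * qi q + qi p * qr q + qj p * qk q - qk p * qj q)
       (qr p * qj q - qi p * qk q + qj p * qr q + qk p * qi q)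
       (qr p * qk q + qi p * qj q - qj p * qi q + qk p * qr q).

Definition qnorm2 (q : quat R) : R :=
  qr q ^+ 2 + qi q ^+ 2 + qj q ^+ 2 + qk q ^+ 2.

Definition qpure (q : quat R) : Prop := qr q = 0.

Definition qunit (q : quat R) : Prop := qnorm2 q = 1.

(** e^{mu theta} = cos theta + mu sin theta (mu a pure unit quaternion) *)
Definition qexp (mu : quat R) (theta : R) : quat R :=
  Quat (cos theta + sin theta * qr mu) (sin theta * qi mu)
       (sin theta * qj mu) (sin theta * qk mu).

(** the real vector (a,b,c,d) of q = a + b i + c j + d k, as an element of the
    product measurable space R * R * (R * R) (Borel product sigma-algebra) *)
Definition qvec (q : quat R) : R * R * (R * R) := (qr q, qi q, (qj q, qk q)).

End Quaternions.

Section GaussianRV.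
Context {R : realType} {d : measure_display} {T : measurableType d}.
Variable P : probability T R.

(** A real random variable is Gaussian if its law is a normal law N(m, s^2)
    with s > 0, or a degenerate Gaussian (Dirac mass at m). *)
Definition real_gaussian (Y : T -> R) : Prop :=
  measurable_fun setT Y /\
  exists m : R,
    (exists s : R, 0 < s /\
       forall A : set R, measurable A -> P (Y @^-1` A) = normal_prob m s A)
    \/ (forall A : set R, measurable A -> P (Y @^-1` A) = dirac m A).

(** A quaternion random variable q = a + b i + c j + d k is Gaussian if the real
    random vector (a,b,c,d) is Gaussian, i.e. its components are random variables
    and every real linear combination of them is a real Gaussian r.v. *)
Definition quat_gaussian (q : T -> quat R) : Prop :=
  [/\ measurable_fun setT (fun w => qr (q w)),
      measurable_fun setT (fun w => qi (q w)),
      measurable_fun setT (fun w => qj (q w)),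
      measurable_fun setT (fun w => qk (q w)) &
      forall t0 t1 t2 t3 : R,
        real_gaussian (fun w => t0 * qr (q w) + t1 * qi (q w)
                                + t2 * qj (q w) + t3 * qk (q w))].

Definition quat_eqd (q q' : T -> quat R) : Prop :=
  forall A : set (R * R * (R * R)), measurable A ->
    P ((fun w => qvec (q w)) @^-1` A) = P ((fun w => qvec (q' w)) @^-1` A).

End GaussianRV.

(** The composite of the maps [x |-> e^{mu a} x e^{nu b}] and
    [x |-> e^{mu c} x e^{nu d}] is [x |-> e^{mu (a + c)} x e^{nu (b + d)}],
    since [e^{mu a} e^{mu c} = e^{mu (a + c)}] for a pure unit [mu].  If the
    law of [q] is invariant under two measurable maps of R^4, it is invariant
    under their composite, so the angle pairs of the hypotheses add up by
    induction on [N]. *)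
From HB Require Import structures.
From mathcomp Require Import all_boot all_order all_algebra.
From mathcomp Require Import all_classical all_reals all_analysis.
From mathcomp Require Import ring.
Import Order.TTheory GRing.Theory Num.Theory.
Local Open Scope classical_set_scope.
Local Open Scope ring_scope.

Section QuaternionAlgebra.
Variable R : realType.
Implicit Types (mu nu x y z : quat R) (a b c d : R).

Definition qrot mu nu a b x : quat R := qmul (qmul (qexp mu a) x) (qexp nu b).

Lemma qmulA x y z : qmul x (qmul y z) = qmul (qmul x y) z.
Proof.
by case: x y z => ? ? ? ? [? ? ? ?] [? ? ? ?]; rewrite /qmul /=; congr Quat; ring.
Qed.

Lemma qexpD mu a c : qpure mu -> qunit mu ->
  qmul (qexp mu a) (qexp mu c) = qexp mu (a + c).
Proof.
case: mu => r i j k; rewrite /qpure /qunit /qnorm2 /= => -> norm1.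
rewrite /qmul /qexp /= cosD sinD; congr Quat; try ring.
(* the real part is off by [sin a sin c (1 - |mu|^2)] *)
apply: subr0_eq.
transitivity (sin a * sin c * (1 - (0 ^+ 2 + i ^+ 2 + j ^+ 2 + k ^+ 2))).
  by ring.
by rewrite norm1 subrr mulr0.
Qed.

Lemma qrot0 mu nu x : qpure mu -> qpure nu -> qrot mu nu 0 0 x = x.
Proof.
case: mu nu x => ? ? ? ? [? ? ? ?] [? ? ? ?]; rewrite /qpure /= => -> ->.
by rewrite /qrot /qmul /qexp /= cos0 sin0; congr Quat; ring.
Qed.

Lemma qrotD mu nu a b c d x : qpure mu -> qunit mu -> qpure nu -> qunit nu ->
  qrot mu nu a b (qrot mu nu c d x) = qrot mu nu (a + c) (b + d) x.
Proof.
move=> mu_pure mu_unit nu_pure nu_unit.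
by rewrite /qrot -qexpD // (addrC b) -qexpD // !qmulA.
Qed.

End QuaternionAlgebra.
Arguments qrot {R}.

Section QuaternionMeasurability.
Context {R : realType} {d : measure_display} {T : measurableType d}.

Definition qmeasurable (f : T -> quat R) : Prop :=
  [/\ measurable_fun setT (fun x => qr (f x)),
      measurable_fun setT (fun x => qi (f x)),
      measurable_fun setT (fun x => qj (f x)) &
      measurable_fun setT (fun x => qk (f x))].

Lemma qmeasurable_cst (u : quat R) : qmeasurable (fun _ => u).
Proof. by split; apply: measurable_cst. Qed.

Lemma qmeasurable_mul (f g : T -> quat R) :
  qmeasurable f -> qmeasurable g -> qmeasurable (fun x => qmul (f x) (g x)).
Proof.
move=> [? ? ? ?] [? ? ? ?]; split => /=;
  repeat (apply: measurable_realfun.measurable_funB ||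
          apply: measurable_realfun.measurable_funD);
  exact: measurable_realfun.measurable_funM.
Qed.

Lemma measurable_qvec (f : T -> quat R) :
  qmeasurable f -> measurable_fun setT (fun x => qvec (f x)).
Proof. by move=> [? ? ? ?]; do 2 apply: measurable_fun_pair. Qed.

End QuaternionMeasurability.

Definition vquat {R : Type} (v : R * R * (R * R)) : quat R :=
  Quat v.1.1 v.1.2 v.2.1 v.2.2.

Lemma vquatK {R : realType} (x : quat R) : vquat (qvec x) = x.
Proof. by case: x. Qed.

Lemma qmeasurable_vquat (R : realType) : qmeasurable (@vquat R).
Proof.
split => /=.
- exact: measurableT_comp measurable_fst measurable_fst.
- exact: measurableT_comp measurable_snd measurable_fst.
- exact: measurableT_comp measurable_fst measurable_snd.
- exact: measurableT_comp measurable_snd measurable_snd.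
Qed.

Section InvariantLaw.
Context {R : realType} {d : measure_display} {T : measurableType d}.
Variables (P : probability T R) (q : T -> quat R).

Definition measurable_qmap (g : quat R -> quat R) : Prop :=
  measurable_fun setT (fun v => qvec (g (vquat v))).

Lemma quat_eqd_comp (f g : quat R -> quat R) : measurable_qmap g ->
  quat_eqd P q (fun w => f (q w)) -> quat_eqd P q (fun w => g (q w)) ->
  quat_eqd P q (fun w => g (f (q w))).
Proof.
move=> mg eqd_f eqd_g A mA.
have preimage_g (x : T -> quat R) : (fun w => qvec (g (x w))) @^-1` A =
    (fun w => qvec (x w)) @^-1` ((fun v => qvec (g (vquat v))) @^-1` A).
  by apply: funext => w; rewrite /preimage /= vquatK.
have mgA : measurable ((fun v => qvec (g (vquat v))) @^-1` A).
  by rewrite -[X in measurable X]setTI; exact: mg.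
by rewrite (preimage_g (fun w => f (q w))) -eqd_f // -preimage_g -eqd_g.
Qed.

Variables (mu nu : quat R).
Hypotheses (mu_pure : qpure mu) (mu_unit : qunit mu).
Hypotheses (nu_pure : qpure nu) (nu_unit : qunit nu).

Lemma measurable_qrot a b : measurable_qmap (qrot mu nu a b).
Proof.
apply: measurable_qvec; apply: qmeasurable_mul; last exact: qmeasurable_cst.
by apply: qmeasurable_mul; [exact: qmeasurable_cst | exact: qmeasurable_vquat].
Qed.

Lemma quat_eqd_qrot_sum n (a b : 'I_n -> R) :
  (forall i, quat_eqd P q (fun w => qrot mu nu (a i) (b i) (q w))) ->
  quat_eqd P q (fun w => qrot mu nu (\sum_(i < n) a i) (\sum_(i < n) b i) (q w)).
Proof.
elim: n a b => [|n IHn] a b eqd_ab.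
  by rewrite !big_ord0; under eq_fun do rewrite qrot0 //.
rewrite !big_ord_recl; under eq_fun do rewrite -qrotD //.
apply: (quat_eqd_comp _ (qrot mu nu (a ord0) (b ord0))).
- exact: measurable_qrot.
- exact: IHn (fun i => eqd_ab (lift ord0 i)).
- exact: eqd_ab.
Qed.
End InvariantLaw.

Theorem mainTheorem1 (R : realType) (d : measure_display) (T : measurableType d)
    (P : probability T R) (mu nu : quat R) (N : nat)
    (alpha beta : 'I_N -> R) (q : T -> quat R) :
  qpure mu -> qunit mu -> qpure nu -> qunit nu ->
  (0 < N)%N ->
  quat_gaussian P q ->
  (forall i : 'I_N,
     quat_eqd P q (fun w => qmul (qmul (qexp mu (alpha i)) (q w)) (qexp nu (beta i)))) ->
  quat_eqd P q (fun w => qmul (qmul (qexp mu (\sum_(i < N) alpha i)) (q w))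
                              (qexp nu (\sum_(i < N) beta i))).
Proof.
move=> mu_pure mu_unit nu_pure nu_unit _ _.
exact: quat_eqd_qrot_sum.
Qed.
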